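(* Let $Z:\Sigma\to\widetilde{\Lambda^C(Y)}$ be a section of $\sigma^C$, given in the local coordinates described in the context by $(t_1,t_2)\mapsto (t_1,t_2,q^a_1,q^a_2,P^a_1,P^a_2)$, and let $h$ be a complex-regularized Hamiltonian section given locally by $p=-H(t_1,t_2,q^a_1,q^a_2,P^a_1,P^a_2)$. Then $Z$ is a solution of $h$ (on this coordinate chart) if and only if, for all $a=1,\dots,n$, \begin{align*} \frac{\partial H}{\partial q^a_1} &= -\partial_1 P^a_1 + \partial_2 P^a_2, & \frac{\partial H}{\partial q^a_2} &= -\partial_1 P^a_2 - \partial_2 P^a_1,\\ \frac{\partial H}{\partial P^a_1} &= \partial_1 q^a_1 + \partial_2 q^a_2, & \frac{\partial H}{\partial P^a_2} &= \partial_1 q^a_2 - \partial_2 q^a_1, \end{align*} where $\partial_k=\partial/\partial t_k$ and the left-hand sides are evaluated at $Z(t)$.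
   Context: Let $(\Sigma,j)$ be a Riemann surface and $\pi:(Y,i)\to(\Sigma,j)$ a holomorphic fiber bundle (i.e. $(Y,i)$ is a complex manifold, $d\pi\circ i=j\circ d\pi$, and $Y$ is locally biholomorphic to a product). The extended multimomentum bundle is $\Lambda^2_2(Y)=\{\lambda\in\Lambda^2T^*Y:\ \lambda(u,v)=0\text{ for all }u,v\in\ker d\pi\}$ with projection $\kappa:\Lambda^2_2(Y)\to Y$, and $\Lambda^C(Y)=\{\lambda\in\Lambda^2_2(Y):\lambda(i\cdot,i\cdot)=\lambda\}$. The tautological 2-form $\Theta$ on $\Lambda^C(Y)$ is $\Theta_\lambda(X_1,X_2)=\lambda(d\kappa X_1,d\kappa X_2)$, and $\Omega=d\Theta$. One has $\pi^*\Lambda^2(\Sigma)\subseteq\Lambda^C(Y)$; set $\widetilde{\Lambda^C(Y)}=\Lambda^C(Y)/\pi^*\Lambda^2(\Sigma)$ (fiberwise quotient over $Y$), with quotient map $\mu^C:\Lambda^C(Y)\to\widetilde{\Lambda^C(Y)}$ and projection $\sigma^C:\widetilde{\Lambda^C(Y)}\to\Sigma$. A complex-regularized Hamiltonian section is a smooth section $h$ of $\mu^C$; put $\Theta^h=h^*\Theta$, $\Omega^h=h^*\Omega$. A section $Z$ of $\sigma^C$ is a solution of $h$ if $Z^*(X\lrcorner\Omega^h)=0$ for all vector fields $X$ on $\widetilde{\Lambda^C(Y)}$. Local coordinates: choose local coordinates $(t_1,t_2)$ on $\Sigma$ and $(t_1,t_2,q^a_1,q^a_2)_{a=1}^n$ on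 $Y$ with $j\partial_{t_1}=\partial_{t_2}$ and $i\,\partial_{q^a_1}=\partial_{q^a_2}$. Every element of $\Lambda^C(Y)$ over such a chart is uniquely of the form $\lambda=p\,dt_1\wedge dt_2+\sum_a(P^a_1dq^a_1+P^a_2dq^a_2)\wedge dt_2-\sum_a(P^a_1dq^a_2-P^a_2dq^a_1)\wedge dt_1$, giving coordinates $(t_1,t_2,q^a_1,q^a_2,P^a_1,P^a_2,p)$ on $\Lambda^C(Y)$ and $(t_1,t_2,q^a_1,q^a_2,P^a_1,P^a_2)$ on $\widetilde{\Lambda^C(Y)}$. A Hamiltonian section is then locally of the form $p=-H(t,q,P)$ for a smooth local function $H$. *)

From HB Require Import structures.
From mathcomp Require Import all_boot all_order all_algebra.
From mathcomp Require Import all_classical all_reals all_analysis.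
Set Implicit Arguments. Unset Strict Implicit. Unset Printing Implicit Defensive.
Import Order.TTheory GRing.Theory Num.Theory.
Import numFieldNormedType.Exports.
Local Open Scope classical_set_scope.
Local Open Scope ring_scope.

Fixpoint Ck {R : realType} {V W : normedModType R} (k : nat) (A : set V)
  (f : V -> W) : Prop :=
  match k with
  | 0%N => forall x, A x -> {for x, continuous f}
  | k'.+1 => (forall x, A x -> differentiable f x) /\
             (forall v : V, Ck k' A (fun x => 'D_v f x))
  end.

Definition smooth_on {R : realType} {V W : normedModType R} (A : set V)
  (f : V -> W) : Prop := forall k, Ck k A f.

(* Coordinates on Sigma: t = (t_1,t_2) = (t 0 0, t 0 1). *)
Definition i0 {m} : 'I_m.+1 := ord0.
Definition i1 {m} : 'I_m.+2 := inord 1.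
Definition i2 {m} : 'I_m.+3 := inord 2.
Definition i3 {m} : 'I_m.+4 := inord 3.

(* Chart of Y: (t, q) with q : 'M_(2,n), row 0 = q_1, row 1 = q_2. *)
Definition Ypt (R : realType) (n : nat) := ('rV[R]_2 * 'M[R]_(2, n))%type.

(* Chart of tilde Lambda^C(Y): (t, M) with M : 'M_(4,n), rows
   0,1,2,3 = q_1, q_2, P_1, P_2. *)
Definition Pt (R : realType) (n : nat) := ('rV[R]_2 * 'M[R]_(4, n))%type.

Definition wedge {T : Type} {R : realType} (al be : T -> R) (u v : T) : R :=
  al u * be v - al v * be u.

Section Lam.
Context {R : realType} {n : nat}.
Definition dt1Y (u : Ypt R n) : R := u.1 i0 i0.
Definition dt2Y (u : Ypt R n) : R := u.1 i0 i1.
Definition dq1Y (a : 'I_n) (u : Ypt R n) : R := u.2 i0 a.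
Definition dq2Y (a : 'I_n) (u : Ypt R n) : R := u.2 i1 a.

Definition lamY (p : R) (P1 P2 : 'I_n -> R) (u v : Ypt R n) : R :=
  p * wedge dt1Y dt2Y u v
  + \sum_(a < n) wedge (fun w => P1 a * dq1Y a w + P2 a * dq2Y a w) dt2Y u v
  - \sum_(a < n) wedge (fun w => P1 a * dq2Y a w - P2 a * dq1Y a w) dt1Y u v.
End Lam.

Section Forms.
Context {R : realType} {n : nat}.

(* d(kappa o h) : tangent vector of tilde Lambda^C chart -> tangent vector of Y
   (kappa o h is the linear projection (t,q,P) |-> (t,q)). *)
Definition dkh (w : Pt R n) : Ypt R n :=
  (w.1, \matrix_(i < 2, a < n) w.2 (widen_ord (isT : (2 <= 4)%N) i) a).

(* Theta^h = h^* Theta, where the section h is p = - H (t,q,P):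
   Theta^h_x(u,v) = lambda_{h(x)}(d(kappa o h) u, d(kappa o h) v). *)
Definition Thetah (H : Pt R n -> R) (x u v : Pt R n) : R :=
  lamY (- H x) (fun a => x.2 i2 a) (fun a => x.2 i3 a) (dkh u) (dkh v).

(* exterior derivative of a 2-form field on a vector space (constant vector fields) *)
Definition dform2 {V : normedModType R} (om : V -> V -> V -> R) (x u v w : V) : R :=
  'D_u (fun y => om y v w) x - 'D_v (fun y => om y u w) x
  + 'D_w (fun y => om y u v) x.

Definition Omegah (H : Pt R n -> R) := dform2 (Thetah H).

Definition interior {V : Type} (X : V -> V) (om : V -> V -> V -> V -> R) (x u v : V) : R :=
  om x (X x) u v.

Definition pullback2 {V : normedModType R} (Z : 'rV[R]_2 -> V)
  (al : V -> V -> V -> R) (t e1 e2 : 'rV[R]_2) : R :=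
  al (Z t) ('D_e1 Z t) ('D_e2 Z t).

Definition Zsec (Q : 'rV[R]_2 -> 'M[R]_(4, n)) (t : 'rV[R]_2) : Pt R n := (t, Q t).

(* Z is a solution of h on the chart (domain U of Sigma, domain W of tilde
   Lambda^C): Z^*(X _| Omega^h) = 0 for every smooth vector field X on W. *)
Definition is_solution_on (W : set (Pt R n)) (U : set 'rV[R]_2)
  (H : Pt R n -> R) (Z : 'rV[R]_2 -> Pt R n) : Prop :=
  forall X : Pt R n -> Pt R n, smooth_on W X ->
  forall t, U t -> forall e1 e2 : 'rV[R]_2,
    pullback2 Z (interior X (Omegah H)) t e1 e2 = 0.

Definition e_t1 : 'rV[R]_2 := delta_mx i0 i0.
Definition e_t2 : 'rV[R]_2 := delta_mx i0 i1.
Definition e_fib (i : 'I_4) (a : 'I_n) : Pt R n := (0, delta_mx i a).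

Definition Qc (Q : 'rV[R]_2 -> 'M[R]_(4, n)) (i : 'I_4) (a : 'I_n) :
  'rV[R]_2 -> R := fun s => Q s i a.
End Forms.

From Pilot Require Import Defs.
From HB Require Import structures.
From mathcomp Require Import all_boot all_order all_algebra.
From mathcomp Require Import all_classical all_reals all_analysis.
From mathcomp Require Import ring.
Import Order.TTheory GRing.Theory Num.Theory.
Import numFieldNormedType.Exports.
Local Open Scope classical_set_scope.
Local Open Scope ring_scope.

(* In the chart, [Thetah H] is [- H dt1^dt2] plus a 2-form whose coefficients
   are linear in the fibre coordinates [P], so [Omegah H] is [- dH^dt1^dt2] plus
   a 3-form with constant coefficients.  Evaluated on a vector [xi] and on the
   two tangent vectors of [Z] over [e1], [e2], it becomes [dt1^dt2 (e1, e2)]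
   times the pairing of the vertical part of [xi] (relative to the tangent plane
   of [Z]) with the defects of the four Hamilton equations.  Hence all these
   contractions vanish iff the defects do; the constant vector fields along the
   fibre coordinates single out one defect at a time. *)

Lemma is_derive_affine {R : realType} (V : normedModType R) (f : V -> R)
    (x u : V) (c : R) :
  (forall h, f (h *: u + x) = f x + h * c) -> is_derive x u f c.
Proof.
move=> hf.
have E : {near 0^', (fun=> c) =1
    (fun h => h^-1 *: ((f \o shift x) (h *: u) - f x))}.
  near=> h; rewrite /= hf addrAC subrr add0r /GRing.scale /= mulrA mulVf ?mul1r //.
  by near: h; exact: nbhs_dnbhs_neq.
have cvc : (fun h => h^-1 *: ((f \o shift x) (h *: u) - f x)) @ 0^' --> c.
  by apply: cvg_trans (near_eq_cvg E) _; exact: cvg_cst.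
by apply: DeriveDef; [apply/cvg_ex; exists c | exact: cvg_lim].
Unshelve. all: by end_near. Qed.

Lemma smooth_on_cst {R : realType} {V W : normedModType R} (A : set V) (c : W) :
  smooth_on A (fun=> c).
Proof.
move=> k; elim: k c => [|k IH] c /=; first by move=> x _; exact: cst_continuous.
split=> [x _|v]; first exact: differentiable_cst.
have -> : (fun x => 'D_v (fun=> c) x) = (fun=> 0 : W).
  by apply/funext => x; exact: derive_cst.
exact: IH.
Qed.

Lemma ord2_cases (j : 'I_2) : j = i0 \/ j = i1.
Proof.
by case: j => [[|[|//]] hj]; [left|right]; apply/val_inj; rewrite /= ?inordK.
Qed.

Lemma ord4_cases (j : 'I_4) : [\/ j = i0, j = i1, j = i2 | j = i3].
Proof.
case: j => [[|[|[|[|//]]]] hj];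
  [constructor 1|constructor 2|constructor 3|constructor 4];
  by apply/val_inj; rewrite /= ?inordK.
Qed.

Lemma forall_ord4 (P : 'I_4 -> Prop) :
  (forall i, P i) <-> [/\ P i0, P i1, P i2 & P i3].
Proof.
split=> [Pi|[P0 P1 P2 P3] i]; first by split; apply: Pi.
by case: (ord4_cases i) => ->.
Qed.

Lemma big_ord4 (V : zmodType) (F : 'I_4 -> V) :
  \sum_(i < 4) F i = F i0 + F i1 + F i2 + F i3.
Proof.
rewrite !big_ord_recr big_ord0 /= add0r.
by congr (_ + _ + _ + _); congr F; apply/val_inj; rewrite /= ?inordK.
Qed.

Lemma big_ord2 (V : zmodType) (F : 'I_2 -> V) : \sum_(i < 2) F i = F i0 + F i1.
Proof.
rewrite !big_ord_recr big_ord0 /= add0r.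
by congr (_ + _); congr F; apply/val_inj; rewrite /= ?inordK.
Qed.

Lemma widen_ord24_i0 : widen_ord (isT : (2 <= 4)%N) i0 = i0.
Proof. exact/val_inj. Qed.

Lemma widen_ord24_i1 : widen_ord (isT : (2 <= 4)%N) i1 = i1.
Proof. by apply/val_inj; rewrite /= !inordK. Qed.

Lemma sum_delta_mx_mul (R : pzRingType) (m n : nat) (k : 'I_m) (b : 'I_n)
    (G : 'I_m -> 'I_n -> R) :
  \sum_(a < n) \sum_(i < m) delta_mx k b i a * G i a = G k b.
Proof.
rewrite (bigD1 b) //= [X in _ + X]big1 => [|a /negbTE ab]; last first.
  by apply: big1 => i _; rewrite mxE ab andbF mul0r.
rewrite addr0 (bigD1 k) //= [X in _ + X]big1 => [|i /negbTE ik]; last first.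
  by rewrite mxE ik mul0r.
by rewrite mxE !eqxx mul1r addr0.
Qed.

Section HamiltonianForms.
Context {R : realType} {n : nat}.
Implicit Types (H : Pt R n -> R) (x u v w xi : Pt R n).

Definition dt12 v w : R := wedge dt1Y dt2Y (dkh v) (dkh w).

Definition Theta_fibre x v w : R :=
  lamY 0 (fun a => x.2 i2 a) (fun a => x.2 i3 a) (dkh v) (dkh w).

Lemma Thetah_split H x v w :
  Thetah H x v w = - H x * dt12 v w + Theta_fibre x v w.
Proof. by rewrite /Thetah /Theta_fibre /lamY mul0r add0r addrA. Qed.

Lemma Theta_fibre_affine (h : R) u x v w :
  Theta_fibre (h *: u + x) v w = Theta_fibre x v w + h * Theta_fibre u v w.
Proof.
rewrite /Theta_fibre /lamY !mul0r !add0r -!sumrB mulr_sumr -big_split /=.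
by apply: eq_bigr => a _; rewrite /wedge !mxE; ring.
Qed.

Lemma derive_Thetah H x u v w : derivable H x u ->
  'D_u (fun y => Thetah H y v w) x = - 'D_u H x * dt12 v w + Theta_fibre u v w.
Proof.
move=> dH.
have -> : (fun y => Thetah H y v w) =
    (- dt12 v w) \*: H + (fun y => Theta_fibre y v w).
  apply/funext => y; rewrite Thetah_split.
  by rewrite -[RHS]/(- dt12 v w * H y + Theta_fibre y v w) mulrC mulrN mulNr.
have dF : is_derive x u (fun y => Theta_fibre y v w) (Theta_fibre u v w).
  by apply: is_derive_affine => h; rewrite Theta_fibre_affine.
have D : is_derive x u ((- dt12 v w) \*: H + (fun y => Theta_fibre y v w))
    ((- dt12 v w) *: 'D_u H x + Theta_fibre u v w).
  by apply: is_deriveD => //; apply: is_deriveZ; exact: derivableP.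
rewrite (derive_val (is_derive := D)) /GRing.scale /=; ring.
Qed.

Lemma Omegah_expand H x xi v w : differentiable H x ->
  Omegah H x xi v w =
    - 'd H x (dt12 v w *: xi - dt12 xi w *: v + dt12 xi v *: w)
    + Theta_fibre xi v w - Theta_fibre v xi w + Theta_fibre w xi v.
Proof.
move=> dH; rewrite /Omegah /dform2 !derive_Thetah; try exact: diff_derivable.
have lin : 'd H x (dt12 v w *: xi - dt12 xi w *: v + dt12 xi v *: w) =
    dt12 v w * 'd H x xi - dt12 xi w * 'd H x v + dt12 xi v * 'd H x w.
  by rewrite linearD linearB !linearZ.
rewrite !deriveE // lin; ring.
Qed.

Lemma linear_vertical (g : {linear Pt R n -> R}) v : v.1 = 0 ->
  g v = \sum_(a < n) \sum_(i < 4) v.2 i a * g (e_fib i a).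
Proof.
case: v => v1 v2 /= ->.
have vert_sum : {morph (fun M => ((0 : 'rV[R]_2), M) : Pt R n) : M N / M + N}.
  by move=> M N; rewrite -[RHS]/(0 + 0, M + N) addr0.
rewrite {1}(matrix_sum_delta v2) (big_morph _ vert_sum (erefl (0 : Pt R n))).
rewrite linear_sum [RHS]exchange_big; apply: eq_bigr => i _.
rewrite (big_morph _ vert_sum (erefl (0 : Pt R n))) linear_sum.
apply: eq_bigr => a _; rewrite -linearZ /=.
by rewrite -[_ *: e_fib i a]/(_ *: 0, _ *: _) scaler0.
Qed.

Definition sec_tangent (D1 D2 : 'M[R]_(4, n)) (e : 'rV[R]_2) : Pt R n :=
  (e, e i0 i0 *: D1 + e i0 i1 *: D2).

Definition vertical_part (D1 D2 : 'M[R]_(4, n)) xi : 'M[R]_(4, n) :=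
  xi.2 - (sec_tangent D1 D2 xi.1).2.

Definition hamilton_rhs (D1 D2 : 'M[R]_(4, n)) (i : 'I_4) (a : 'I_n) : R :=
  match val i with
  | 0%N => - D1 i2 a + D2 i3 a
  | 1%N => - D1 i3 a - D2 i2 a
  | 2%N => D1 i0 a + D2 i1 a
  | _ => D1 i1 a - D2 i0 a
  end.

Lemma Omegah_sec_tangent H x xi (D1 D2 : 'M[R]_(4, n)) (e1 e2 : 'rV[R]_2) :
  differentiable H x ->
  Omegah H x xi (sec_tangent D1 D2 e1) (sec_tangent D1 D2 e2) =
  dt12 (sec_tangent D1 D2 e1) (sec_tangent D1 D2 e2) *
  \sum_(a < n) \sum_(i < 4) vertical_part D1 D2 xi i a *
    (hamilton_rhs D1 D2 i a - 'D_(e_fib i a) H x).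
Proof.
move=> dH; rewrite Omegah_expand // linear_vertical; last first.
  apply/rowP => j; rewrite /dt12 /wedge /dt1Y /dt2Y /= !mxE /=.
  by case: (ord2_cases j) => ->; ring.
rewrite /Theta_fibre /lamY !mul0r !add0r.
rewrite -!sumrB -sumrN -big_split -sumrB -big_split mulr_sumr /=.
apply: eq_bigr => a _; rewrite !big_ord4 !deriveE // /hamilton_rhs /= !inordK //.
rewrite /dt12 /wedge /dq1Y /dq2Y /dt1Y /dt2Y /dkh /vertical_part /= !mxE.
by rewrite widen_ord24_i0 widen_ord24_i1; ring.
Qed.

Lemma hamilton_rhsP (h : 'I_4 -> R) (D1 D2 : 'M[R]_(4, n)) (a : 'I_n) :
  (forall i, h i = hamilton_rhs D1 D2 i a) <->
  [/\ h i0 = - D1 i2 a + D2 i3 a, h i1 = - D1 i3 a - D2 i2 a,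
      h i2 = D1 i0 a + D2 i1 a & h i3 = D1 i1 a - D2 i0 a].
Proof. by apply: iff_trans (forall_ord4 _) _; rewrite /hamilton_rhs /= !inordK. Qed.

Lemma vertical_part_e_fib (D1 D2 : 'M[R]_(4, n)) (i : 'I_4) (a : 'I_n) :
  vertical_part D1 D2 (e_fib i a) = delta_mx i a.
Proof. by rewrite /vertical_part /= !mxE !scale0r addr0 subr0. Qed.

Lemma dt12_sec_tangent_e_t (D1 D2 : 'M[R]_(4, n)) :
  dt12 (sec_tangent D1 D2 e_t1) (sec_tangent D1 D2 e_t2) = 1.
Proof.
rewrite /dt12 /wedge /dt1Y /dt2Y /= /e_t1 /e_t2 !mxE !eqxx /=.
have -> : (i0 == i1 :> 'I_2) = false by rewrite -val_eqE /= inordK.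
by rewrite mul0r subr0 mulr1.
Qed.

End HamiltonianForms.

Section CoordinateSection.
Context {R : realType} {n : nat}.
Variable Q : 'rV[R]_2 -> 'M[R]_(4, n).

Lemma derive_Qc (t v : 'rV[R]_2) (i : 'I_4) (a : 'I_n) :
  differentiable Q t -> ('D_v Q t) i a = 'D_v (Qc Q i a) t.
Proof. by move=> dQ; rewrite derive_mx ?mxE //; exact: diff_derivable. Qed.

Lemma derive_Zsec (t e : 'rV[R]_2) : differentiable Q t ->
  'D_e (Zsec Q) t = sec_tangent ('D_e_t1 Q t) ('D_e_t2 Q t) e.
Proof.
move=> dQ; have did : differentiable id t by exact: ex_diff.
rewrite /Zsec deriveE; last exact: differentiable_pair.
rewrite diff_pair // diff_val; congr pair.
by rewrite {1}(row_sum_delta e) linear_sum big_ord2 !linearZ -!deriveE.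
Qed.

Lemma pullback2_interior_Omegah H (X : Pt R n -> Pt R n) (t e1 e2 : 'rV[R]_2) :
  differentiable Q t -> differentiable H (Zsec Q t) ->
  pullback2 (Zsec Q) (Defs.interior X (Omegah H)) t e1 e2 =
  dt12 (sec_tangent ('D_e_t1 Q t) ('D_e_t2 Q t) e1)
       (sec_tangent ('D_e_t1 Q t) ('D_e_t2 Q t) e2) *
  \sum_(a < n) \sum_(i < 4)
    vertical_part ('D_e_t1 Q t) ('D_e_t2 Q t) (X (Zsec Q t)) i a *
    (hamilton_rhs ('D_e_t1 Q t) ('D_e_t2 Q t) i a - 'D_(e_fib i a) H (Zsec Q t)).
Proof.
move=> dQ dH; rewrite /pullback2 /Defs.interior !derive_Zsec //.
exact: Omegah_sec_tangent.
Qed.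

Lemma hamilton_rhs_ZsecP (h : 'I_4 -> R) (t : 'rV[R]_2) (a : 'I_n) :
  differentiable Q t ->
  (forall i, h i = hamilton_rhs ('D_e_t1 Q t) ('D_e_t2 Q t) i a) <->
  [/\ h i0 = - 'D_e_t1 (Qc Q i2 a) t + 'D_e_t2 (Qc Q i3 a) t,
      h i1 = - 'D_e_t1 (Qc Q i3 a) t - 'D_e_t2 (Qc Q i2 a) t,
      h i2 = 'D_e_t1 (Qc Q i0 a) t + 'D_e_t2 (Qc Q i1 a) t
    & h i3 = 'D_e_t1 (Qc Q i1 a) t - 'D_e_t2 (Qc Q i0 a) t].
Proof. by move=> dQ; rewrite -!derive_Qc //; exact: hamilton_rhsP. Qed.

End CoordinateSection.

Theorem mainTheorem1 (R : realType) (n : nat) (W : set (Pt R n))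
  (U : set 'rV[R]_2) (H : Pt R n -> R) (Q : 'rV[R]_2 -> 'M[R]_(4, n)) :
  open W -> open U -> smooth_on W H -> smooth_on U Q ->
  (forall t, U t -> W (Zsec Q t)) ->
  (is_solution_on W U H (Zsec Q) <->
   forall t, U t -> forall a : 'I_n,
     [/\ 'D_(e_fib i0 a) H (Zsec Q t) =
           - 'D_e_t1 (Qc Q i2 a) t + 'D_e_t2 (Qc Q i3 a) t,
         'D_(e_fib i1 a) H (Zsec Q t) =
           - 'D_e_t1 (Qc Q i3 a) t - 'D_e_t2 (Qc Q i2 a) t,
         'D_(e_fib i2 a) H (Zsec Q t) =
           'D_e_t1 (Qc Q i0 a) t + 'D_e_t2 (Qc Q i1 a) t
       & 'D_(e_fib i3 a) H (Zsec Q t) =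
           'D_e_t1 (Qc Q i1 a) t - 'D_e_t2 (Qc Q i0 a) t]).
Proof.
move=> _ _ sH sQ ZW.
have dQ : forall t, U t -> differentiable Q t := (sQ 1%N).1.
have dH t : U t -> differentiable H (Zsec Q t).
  by move=> Ut; exact: (sH 1%N).1 _ (ZW t Ut).
have eqsP t a (Ut : U t) :=
  hamilton_rhs_ZsecP Q (fun i => 'D_(e_fib i a) H (Zsec Q t)) t a (dQ t Ut).
split=> [sol t Ut a | eqs X _ t Ut e1 e2];
  have [dQt dHt] := (dQ t Ut, dH t Ut).
- apply/(eqsP t a Ut) => i.
  have := sol _ (smooth_on_cst W (e_fib i a)) t Ut e_t1 e_t2.
  rewrite pullback2_interior_Omegah // dt12_sec_tangent_e_t mul1r.
  rewrite vertical_part_e_fib sum_delta_mx_mul => /eqP.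
  by rewrite subr_eq0 => /eqP.
- rewrite pullback2_interior_Omegah // big1 ?mulr0 // => a _.
  have /(eqsP t a Ut) hamilton := eqs t Ut a.
  by apply: big1 => i _; rewrite -hamilton subrr mulr0.
Qed.
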